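(* Let $\eta=10^{-4}$. There exist absolute constants $c_0,c_1,c_2>0$ such that the following holds for all integers $K\ge1$ and all $\epsilon$ with $c_0/K\le\epsilon\le c_1$. Let $n=2K$, and let $\mathcal F$ be the family of instances with $n$ arms in which every arm is a Bernoulli arm with mean in $\{1/2-\eta,\,1/2+\eta\}$. If an algorithm, on every instance in $\mathcal F$, outputs an $\epsilon$-top-$K$ set of arms with probability at least $0.9$, then there is an instance in $\mathcal F$ on which the expected number of pulls made by the algorithm is at least $c_2\, n\log(1/\epsilon)$.
   Context: Stochastic bandit model: arm $i$ has an unknown reward distribution with mean $\theta_i$; an algorithm adaptively pulls arms, each pull of arm $i$ giving an independent sample from its distribution, and finally outputs a set of arms. With arms indexed so that $\theta_1\ge\dots\ge\theta_n$, for $T\subseteq[n]$ with $|T|=K$ the aggregate regret is $\mathcal R_T=\frac1K(\sum_{i=1}^K\theta_i-\sum_{i\in T}\theta_i)$, and $T$ is an $\epsilon$-top-$K$ set if $|T|=K$ and $\mathcal R_T\le\epsilon$. *)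

From Stdlib Require Import Reals List Arith.
Import ListNotations.
Open Scope R_scope.

(** A history is a list of (arm, outcome) pairs, MOST RECENT PULL FIRST.
    An algorithm is a behavioural policy: after each history it either pulls
    arm i (probability [pull h i]) or stops and outputs a set of arms,
    encoded as a boolean indicator vector S of length n (probability
    [out h S]). *)

Definition hist := list (nat * bool).

Record policy := mkPolicy {
  pull : hist -> nat -> R;
  out  : hist -> list bool -> R }.

Definition sumR (l : list R) : R := fold_right Rplus 0 l.

Fixpoint allvec (n : nat) : list (list bool) :=
  match n with
  | O => [[]]
  | S m => flat_map (fun v => [true :: v; false :: v]) (allvec m)
  end.

Fixpoint hist_all (n m : nat) : list hist :=
  match m with
  | O => [[]]
  | S m' => flat_map (fun h => flat_map (fun i => [(i, true) :: h; (i, false) :: h])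
                                        (seq 0 n))
                     (hist_all n m')
  end.

Definition valid_policy (n : nat) (pol : policy) : Prop :=
  forall h : hist,
    (forall i, 0 <= pull pol h i) /\
    (forall S, 0 <= out pol h S) /\
    sumR (map (pull pol h) (seq 0 n)) + sumR (map (out pol h) (allvec n)) = 1.

(** probability that the run starts with history h (instance theta,
    arm i gives outcome true with probability theta i) *)
Fixpoint hprob (theta : nat -> R) (pol : policy) (h : hist) : R :=
  match h with
  | [] => 1
  | (i, b) :: h' =>
      hprob theta pol h' * pull pol h' i * (if b then theta i else 1 - theta i)
  end.

Fixpoint set_sum (theta : nat -> R) (j : nat) (S : list bool) : R :=
  match S with
  | [] => 0
  | b :: S' => (if b then theta j else 0) + set_sum theta (Datatypes.S j) S'
  end.

Definition card (S : list bool) : nat := count_occ Bool.bool_dec S true.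

(** sum of the K largest means theta_1 + ... + theta_K
    (= maximum of the sum over K-subsets of the n arms; K <= n assumed) *)
Definition topK_sum (theta : nat -> R) (n K : nat) : R :=
  fold_right Rmax 0
    (map (set_sum theta 0) (filter (fun S => Nat.eqb (card S) K) (allvec n))).

Definition regret (theta : nat -> R) (n K : nat) (S : list bool) : R :=
  / INR K * (topK_sum theta n K - set_sum theta 0 S).

Definition eps_topK (theta : nat -> R) (n K : nat) (eps : R) (S : list bool) : Prop :=
  card S = K /\ regret theta n K S <= eps.

Definition eps_topKb (theta : nat -> R) (n K : nat) (eps : R) (S : list bool) : bool :=
  Nat.eqb (card S) K && (if Rle_dec (regret theta n K S) eps then true else false).

(** P(algorithm stops after exactly m pulls with an eps-top-K output) *)
Definition succ_at (theta : nat -> R) (pol : policy) (n K : nat) (eps : R) (m : nat) : R :=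
  sumR (map (fun h => hprob theta pol h *
                      sumR (map (fun S => if eps_topKb theta n K eps S then out pol h S else 0)
                                (allvec n)))
            (hist_all n m)).

(** P(number of pulls >= m)  (non-terminating runs count as infinitely many) *)
Definition reach (theta : nat -> R) (pol : policy) (n m : nat) : R :=
  sumR (map (hprob theta pol) (hist_all n m)).

(** P(output is an eps-top-K set) >= p  (sup of partial sums of a
    nonnegative series is >= p) *)
Definition success_prob_ge (theta : nat -> R) (pol : policy) (n K : nat) (eps p : R) : Prop :=
  forall b, b < p -> exists M, b < sum_f_R0 (succ_at theta pol n K eps) M.

(** E[number of pulls] = sum_{m>=1} P(N >= m) >= B  (possibly +infinity) *)
Definition expected_pulls_ge (theta : nat -> R) (pol : policy) (n : nat) (B : R) : Prop :=
  forall b, b < B -> exists M, b < sum_f_R0 (fun m => reach theta pol n (S m)) M.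

Definition eta : R := / 10000.

Definition in_family (n : nat) (theta : nat -> R) : Prop :=
  forall i, (i < n)%nat -> theta i = 1/2 - eta \/ theta i = 1/2 + eta.

From Stdlib Require Import Reals List Lra Lia Classical Bool ZArith.
Import ListNotations.
Open Scope R_scope.

(** Put the uniform prior on the [2^n] instances of the family.  The
    likelihood of a history factorises over the arms, and an arm pulled at
    most [L] times keeps posterior probability at least [1 / (1 + r^L)],
    [r = (1/2 + eta) / (1/2 - eta)], on each of its two means.  An output [S]
    with [|S| = K] is eps-top-K only if at most [eps K / (2 eta)] of its
    arms are low or at most that many arms outside it are high.  After
    fewer than [K (L + 1) / 2] pulls more than [K / 2] arms of [S] and more
    than [K / 2] arms outside [S] have been pulled at most [L] times, and an
    exponential-moment bound shows that, for [L ~ ln (1/eps) / 2], any output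
    is then eps-top-K with posterior probability at most [1/1000].  Averaging
    the success guarantee over the prior, some instance makes at least
    [K (L + 1) / 2 ~ n ln (1/eps) / 8] pulls with probability [0.899]. *)

Lemma sumR_app l1 l2 : sumR (l1 ++ l2) = sumR l1 + sumR l2.
Proof. induction l1; simpl; [ring | rewrite IHl1; ring]. Qed.

Lemma sumR_map_plus {A} (f g : A -> R) l :
  sumR (map (fun x => f x + g x) l) = sumR (map f l) + sumR (map g l).
Proof. induction l; simpl; [ring | rewrite IHl; ring]. Qed.

Lemma sumR_map_scal {A} (c : R) (f : A -> R) l :
  sumR (map (fun x => c * f x) l) = c * sumR (map f l).
Proof. induction l; simpl; [ring | rewrite IHl; ring]. Qed.

Lemma sumR_map_const {A} (c : R) (l : list A) :
  sumR (map (fun _ => c) l) = INR (length l) * c.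
Proof.
  induction l; simpl length; [simpl; ring|].
  rewrite S_INR; simpl; rewrite IHl; ring.
Qed.

Lemma sumR_map_ext {A} (f g : A -> R) l :
  (forall x, In x l -> f x = g x) -> sumR (map f l) = sumR (map g l).
Proof.
  induction l; simpl; intros H; [reflexivity|].
  rewrite H, IHl by auto; reflexivity.
Qed.

Lemma sumR_map_le {A} (f g : A -> R) l :
  (forall x, In x l -> f x <= g x) -> sumR (map f l) <= sumR (map g l).
Proof.
  induction l; simpl; intros H; [lra|].
  assert (f a <= g a) by auto.
  assert (sumR (map f l) <= sumR (map g l)) by auto.
  lra.
Qed.

Lemma sumR_map_lt {A} (f g : A -> R) l : l <> [] ->
  (forall x, In x l -> f x < g x) -> sumR (map f l) < sumR (map g l).
Proof.
  induction l as [|a l IH]; intros Hne H; [congruence|]; simpl.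
  assert (f a < g a) by (apply H; left; reflexivity).
  destruct l as [|b l]; [simpl; lra|].
  assert (sumR (map f (b :: l)) < sumR (map g (b :: l)))
    by (apply IH; [congruence | auto with datatypes]).
  lra.
Qed.

Lemma sumR_map_nonneg {A} (f : A -> R) l :
  (forall x, In x l -> 0 <= f x) -> 0 <= sumR (map f l).
Proof.
  intros H; rewrite <- (Rmult_0_r (INR (length l))), <- sumR_map_const.
  now apply sumR_map_le.
Qed.

Lemma sumR_flat_map {A B} (f : B -> R) (g : A -> list B) l :
  sumR (map f (flat_map g l)) = sumR (map (fun x => sumR (map f (g x))) l).
Proof. induction l; simpl; auto. rewrite map_app, sumR_app, IHl; reflexivity. Qed.

Lemma sumR_map_swap {A B} (F : A -> B -> R) l1 l2 :
  sumR (map (fun x => sumR (map (fun y => F x y) l2)) l1) =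
  sumR (map (fun y => sumR (map (fun x => F x y) l1)) l2).
Proof.
  induction l1; simpl.
  - rewrite sumR_map_const; ring.
  - rewrite IHl1, <- sumR_map_plus; reflexivity.
Qed.

Lemma sumR_map_swap3 {A B C} (p : A -> B -> R) (q : A -> C -> R) (o : B -> C -> R) la lb lc :
  sumR (map (fun a => sumR (map (fun b => p a b * sumR (map (fun c => q a c * o b c) lc)) lb)) la) =
  sumR (map (fun b => sumR (map (fun c => o b c * sumR (map (fun a => p a b * q a c) la)) lc)) lb).
Proof.
  rewrite sumR_map_swap; apply sumR_map_ext; intros b _.
  rewrite (sumR_map_ext _ (fun a => sumR (map (fun c => o b c * (p a b * q a c)) lc)))
    by (intros a _; rewrite <- sumR_map_scal; apply sumR_map_ext; intros; ring).
  rewrite sumR_map_swap; apply sumR_map_ext; intros c _; apply sumR_map_scal.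
Qed.

Lemma exists_ge_average {A} (f : A -> R) c l : l <> [] ->
  INR (length l) * c <= sumR (map f l) -> exists x, In x l /\ c <= f x.
Proof.
  intros Hne H; apply NNPP; intros Hno.
  assert (sumR (map f l) < sumR (map (fun _ => c) l)); [|rewrite sumR_map_const in *; lra].
  apply sumR_map_lt; auto.
  intros x Hx; apply Rnot_le_lt; intros Hc; eauto.
Qed.

Lemma sum_f_R0_sumR f N : sum_f_R0 f N = sumR (map f (seq 0 (S N))).
Proof.
  induction N; [simpl; ring|].
  rewrite (seq_S (S N)), map_app, sumR_app, <- IHN; simpl; ring.
Qed.

Lemma allvec_length n v : In v (allvec n) -> length v = n.
Proof.
  revert v; induction n; intros v H; simpl in H.
  - now destruct H as [<- | []].
  - apply in_flat_map in H; destruct H as [w [Hw H]].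
    simpl in H; destruct H as [<- | [<- | []]]; simpl; f_equal; auto.
Qed.

Lemma in_allvec n v : length v = n -> In v (allvec n).
Proof.
  revert v; induction n; intros [|b v] H; simpl in H; try lia; simpl; auto.
  apply in_flat_map; exists v; split; [apply IHn; lia | destruct b; simpl; auto].
Qed.

Definition arms_below (n : nat) (h : hist) : Prop := Forall (fun e => (fst e < n)%nat) h.

Lemma hist_all_spec n m h : In h (hist_all n m) -> length h = m /\ arms_below n h.
Proof.
  revert h; induction m; intros h H; simpl in H.
  - destruct H as [<- | []]; split; [reflexivity | constructor].
  - apply in_flat_map in H; destruct H as [h' [Hh' H]].
    apply in_flat_map in H; destruct H as [i [Hi H]].
    apply in_seq in Hi; destruct (IHm h' Hh') as [Hl HF].
    simpl in H; destruct H as [<- | [<- | []]];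
      (split; [simpl; lia | constructor; simpl; auto; lia]).
Qed.

Definition stop_at (theta : nat -> R) (pol : policy) (n m : nat) : R :=
  sumR (map (fun h => hprob theta pol h * sumR (map (out pol h) (allvec n))) (hist_all n m)).

Lemma reach_0 theta pol n : reach theta pol n 0 = 1.
Proof. unfold reach; simpl; ring. Qed.

Section Run.
Variables (theta : nat -> R) (pol : policy) (n : nat).
Hypothesis pol_valid : valid_policy n pol.
Hypothesis theta_prob : forall i, 0 <= theta i <= 1.

Lemma hprob_nonneg h : 0 <= hprob theta pol h.
Proof.
  induction h as [|[i o] h IH]; simpl; [lra|].
  destruct (pol_valid h) as [Hp _]; specialize (Hp i); specialize (theta_prob i).
  apply Rmult_le_pos; [now apply Rmult_le_pos | destruct o; lra].
Qed.

Lemma stop_at_nonneg m : 0 <= stop_at theta pol n m.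
Proof.
  apply sumR_map_nonneg; intros h _; apply Rmult_le_pos; [apply hprob_nonneg|].
  apply sumR_map_nonneg; intros S _; apply (pol_valid h).
Qed.

Lemma reach_nonneg m : 0 <= reach theta pol n m.
Proof. apply sumR_map_nonneg; intros; apply hprob_nonneg. Qed.

Lemma reach_S m : reach theta pol n m = reach theta pol n (S m) + stop_at theta pol n m.
Proof.
  unfold reach, stop_at; simpl hist_all; rewrite sumR_flat_map, <- sumR_map_plus.
  apply sumR_map_ext; intros h _; rewrite sumR_flat_map.
  rewrite (sumR_map_ext _ (fun i => hprob theta pol h * pull pol h i))
    by (intros i _; simpl; ring).
  rewrite sumR_map_scal; destruct (pol_valid h) as [_ [_ E]].
  rewrite <- Rmult_plus_distr_l, E; ring.
Qed.

Lemma reach_telescope k a :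
  sumR (map (stop_at theta pol n) (seq a k)) + reach theta pol n (a + k) = reach theta pol n a.
Proof.
  revert a; induction k; intros a; simpl.
  - rewrite Nat.add_0_r; ring.
  - rewrite (reach_S a), <- (IHk (S a)), <- plus_n_Sm; simpl; ring.
Qed.

Lemma reach_antimono a k : reach theta pol n (a + k) <= reach theta pol n a.
Proof.
  rewrite <- (reach_telescope k a).
  assert (0 <= sumR (map (stop_at theta pol n) (seq a k)))
    by (apply sumR_map_nonneg; intros; apply stop_at_nonneg).
  lra.
Qed.

Lemma sum_stop_at_le_1 M : sumR (map (stop_at theta pol n) (seq 0 M)) <= 1.
Proof.
  pose proof (reach_telescope M 0); pose proof (reach_nonneg (0 + M)).
  rewrite reach_0 in *; lra.
Qed.

Lemma succ_at_le_stop_at K eps m :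
  0 <= succ_at theta pol n K eps m <= stop_at theta pol n m.
Proof.
  assert (Hsel : forall h S, 0 <= (if eps_topKb theta n K eps S then out pol h S else 0)
                             <= out pol h S).
  { intros h S; destruct (pol_valid h) as [_ [Ho _]]; specialize (Ho S).
    destruct (eps_topKb theta n K eps S); lra. }
  split; [apply sumR_map_nonneg | apply sumR_map_le]; intros h _.
  - apply Rmult_le_pos; [apply hprob_nonneg | apply sumR_map_nonneg; intros; apply Hsel].
  - apply Rmult_le_compat_l; [apply hprob_nonneg | apply sumR_map_le; intros; apply Hsel].
Qed.

Lemma succ_le_succ_before_plus_reach K eps M N :
  sumR (map (succ_at theta pol n K eps) (seq 0 N)) <=
  sumR (map (succ_at theta pol n K eps) (seq 0 M)) + reach theta pol n M.
Proof.
  pose proof (reach_nonneg M).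
  destruct (Nat.le_gt_cases N M) as [HNM | HNM].
  - replace M with (N + (M - N))%nat by lia; rewrite seq_app, map_app, sumR_app.
    assert (0 <= sumR (map (succ_at theta pol n K eps) (seq (0 + N) (M - N))))
      by (apply sumR_map_nonneg; intros; apply succ_at_le_stop_at).
    replace (N + (M - N))%nat with M by lia; lra.
  - replace N with (M + (N - M))%nat by lia; rewrite seq_app, map_app, sumR_app.
    assert (sumR (map (succ_at theta pol n K eps) (seq (0 + M) (N - M))) <=
            sumR (map (stop_at theta pol n) (seq (0 + M) (N - M))))
      by (apply sumR_map_le; intros; apply succ_at_le_stop_at).
    pose proof (reach_telescope (N - M) (0 + M)); pose proof (reach_nonneg (0 + M + (N - M))).
    simpl in *; lra.
Qed.

Lemma success_le_succ_before_plus_reach K eps p M :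
  success_prob_ge theta pol n K eps p ->
  p <= sumR (map (succ_at theta pol n K eps) (seq 0 M)) + reach theta pol n M.
Proof.
  intros Hsucc; apply Rnot_lt_le; intros Hlt.
  destruct (Hsucc _ Hlt) as [N HN]; rewrite sum_f_R0_sumR in HN.
  pose proof (succ_le_succ_before_plus_reach K eps M (S N)); lra.
Qed.

Lemma expected_pulls_ge_of_reach M :
  expected_pulls_ge theta pol n (INR M * reach theta pol n M).
Proof.
  intros b Hb; exists (M - 1)%nat.
  destruct M as [|M].
  - simpl in *; pose proof (reach_nonneg 1); lra.
  - replace (S M - 1)%nat with M by lia; rewrite sum_f_R0_sumR.
    apply (Rlt_le_trans _ _ _ Hb).
    transitivity (sumR (map (fun _ => reach theta pol n (S M)) (seq 0 (S M)))).
    + rewrite sumR_map_const, length_seq; lra.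
    + apply sumR_map_le; intros x Hx; apply in_seq in Hx.
      replace (S M) with (S x + (S M - S x))%nat at 1 by lia; apply reach_antimono.
Qed.

End Run.

Definition mean_of (b : bool) : R := if b then 1/2 + eta else 1/2 - eta.

Definition inst (v : list bool) (i : nat) : R := mean_of (nth i v false).

Lemma eta_pos : 0 < eta.
Proof. unfold eta; lra. Qed.

Lemma mean_of_bounds b : 0 < mean_of b < 1.
Proof. unfold mean_of, eta; destruct b; lra. Qed.

Lemma inst_in_family n v : in_family n (inst v).
Proof. intros i _; unfold inst, mean_of; destruct (nth i v false); auto. Qed.

Lemma inst_prob v i : 0 <= inst v i <= 1.
Proof. pose proof (mean_of_bounds (nth i v false)); unfold inst; lra. Qed.

Fixpoint vprod (f : nat -> bool -> R) (v : list bool) : R :=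
  match v with [] => 1 | b :: v' => f 0%nat b * vprod (fun k => f (S k)) v' end.

Fixpoint prod_nat (f : nat -> R) (n : nat) : R :=
  match n with 0%nat => 1 | S n' => f 0%nat * prod_nat (fun k => f (S k)) n' end.

Fixpoint cnt_nat (P : nat -> bool) (n : nat) : nat :=
  match n with
  | 0%nat => 0
  | S n' => ((if P 0%nat then 1 else 0) + cnt_nat (fun k => P (S k)) n')%nat
  end.

Lemma sumR_vprod_allvec n : forall f,
  sumR (map (vprod f) (allvec n)) = prod_nat (fun k => f k true + f k false) n.
Proof.
  induction n; intros f; simpl; [ring|].
  rewrite sumR_flat_map, <- (IHn (fun k => f (S k))), <- sumR_map_scal.
  apply sumR_map_ext; intros v _; simpl; ring.
Qed.

Lemma vprod_ext v : forall f g, (forall k b, f k b = g k b) -> vprod f v = vprod g v.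
Proof.
  induction v; intros f g H; simpl; auto.
  rewrite H; f_equal; apply IHv; auto.
Qed.

Lemma vprod_const1 v : vprod (fun _ _ => 1) v = 1.
Proof.
  induction v; simpl; auto.
  rewrite IHv; ring.
Qed.

Lemma vprod_mul v : forall f g,
  vprod (fun k b => f k b * g k b) v = vprod f v * vprod g v.
Proof.
  induction v; intros f g; simpl; [ring|].
  rewrite (IHv (fun k => f (S k)) (fun k => g (S k))); ring.
Qed.

Lemma vprod_update v : forall i F c, (i < length v)%nat ->
  vprod (fun k b => F k b * (if Nat.eqb k i then c b else 1)) v = vprod F v * c (nth i v false).
Proof.
  induction v as [|b v IH]; intros i F c Hi; simpl in Hi; [lia|].
  destruct i as [|i]; simpl.
  - rewrite (vprod_ext v _ (fun k => F (S k))) by (intros; simpl; ring); ring.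
  - rewrite (IH i (fun k => F (S k)) c) by lia; ring.
Qed.

Lemma prod_nat_ext n : forall a b, (forall k, a k = b k) -> prod_nat a n = prod_nat b n.
Proof.
  induction n; intros a b H; simpl; auto.
  rewrite H, (IHn _ (fun k => b (S k))); auto.
Qed.

Lemma prod_nat_nonneg n : forall a, (forall k, 0 <= a k) -> 0 <= prod_nat a n.
Proof.
  induction n; intros a H; simpl; [lra|].
  apply Rmult_le_pos; auto.
Qed.

Lemma prod_nat_le n : forall a b rho,
  (forall k, 0 <= a k /\ a k <= rho k * b k) ->
  prod_nat a n <= prod_nat rho n * prod_nat b n.
Proof.
  induction n; intros a b rho H; simpl; [lra|].
  destruct (H 0%nat) as [H1 H2].
  pose proof (IHn (fun k => a (S k)) (fun k => b (S k)) (fun k => rho (S k)) (fun k => H (S k))).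
  pose proof (prod_nat_nonneg n (fun k => a (S k)) (fun k => proj1 (H (S k)))).
  replace (rho 0%nat * prod_nat (fun k => rho (S k)) n * (b 0%nat * prod_nat (fun k => b (S k)) n))
    with ((rho 0%nat * b 0%nat) * (prod_nat (fun k => rho (S k)) n * prod_nat (fun k => b (S k)) n))
    by ring.
  apply Rmult_le_compat; auto.
Qed.

Lemma prod_nat_if_const n : forall (P : nat -> bool) q,
  prod_nat (fun k => if P k then q else 1) n = q ^ cnt_nat P n.
Proof.
  induction n; intros P q; simpl; auto.
  rewrite IHn; destruct (P 0%nat); simpl; ring.
Qed.

Definition outcome_lik (b o : bool) : R := if o then mean_of b else 1 - mean_of b.

Lemma outcome_lik_pos b o : 0 < outcome_lik b o.
Proof. pose proof (mean_of_bounds b); unfold outcome_lik; destruct o; lra. Qed.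

Fixpoint arm_lik (h : hist) (k : nat) (b : bool) : R :=
  match h with
  | [] => 1
  | (i, o) :: h' =>
      arm_lik h' k b * (if Nat.eqb k i then outcome_lik b o else 1)
  end.

Fixpoint pull_weight (pol : policy) (h : hist) : R :=
  match h with [] => 1 | (i, _) :: h' => pull_weight pol h' * pull pol h' i end.

Lemma arm_lik_nonneg h k b : 0 <= arm_lik h k b.
Proof.
  induction h as [|[i o] h IH]; simpl; [lra|].
  apply Rmult_le_pos; auto; destruct (Nat.eqb k i); [|lra].
  apply Rlt_le, outcome_lik_pos.
Qed.

Lemma pull_weight_nonneg pol n h : valid_policy n pol -> 0 <= pull_weight pol h.
Proof.
  intros Hv; induction h as [|[i o] h IH]; simpl; [lra|].
  apply Rmult_le_pos; auto; apply (Hv h).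
Qed.

Lemma hprob_inst pol v h : arms_below (length v) h ->
  hprob (inst v) pol h = pull_weight pol h * vprod (arm_lik h) v.
Proof.
  induction h as [|[i o] h IH]; intros HF.
  - simpl; rewrite vprod_const1; ring.
  - inversion HF; subst; simpl in *.
    rewrite IH by auto.
    change (arm_lik ((i, o) :: h)) with
      (fun k b => arm_lik h k b * (if Nat.eqb k i then outcome_lik b o else 1)).
    rewrite vprod_update by auto; unfold inst, outcome_lik; destruct o; ring.
Qed.

Lemma sumR_hprob_inst_vprod pol n h (g : nat -> bool -> R) : arms_below n h ->
  sumR (map (fun v => hprob (inst v) pol h * vprod g v) (allvec n)) =
  pull_weight pol h *
    prod_nat (fun k => arm_lik h k true * g k true + arm_lik h k false * g k false) n.
Proof.
  intros HF.
  rewrite <- (sumR_vprod_allvec n (fun k b => arm_lik h k b * g k b)), <- sumR_map_scal.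
  apply sumR_map_ext; intros v Hv; apply allvec_length in Hv.
  rewrite hprob_inst, vprod_mul by (rewrite Hv; auto); ring.
Qed.

Lemma sumR_hprob_inst pol n h : arms_below n h ->
  sumR (map (fun v => hprob (inst v) pol h) (allvec n)) =
  pull_weight pol h * prod_nat (fun k => arm_lik h k true + arm_lik h k false) n.
Proof.
  intros HF; rewrite <- (sumR_map_ext (fun v => hprob (inst v) pol h * vprod (fun _ _ => 1) v))
    by (intros; rewrite vprod_const1; ring).
  rewrite sumR_hprob_inst_vprod by auto.
  f_equal; apply prod_nat_ext; intros; ring.
Qed.

Fixpoint low_in (S v : list bool) : nat :=
  match S, v with
  | s :: S', x :: v' => ((if s && negb x then 1 else 0) + low_in S' v')%nat
  | _, _ => 0
  end.

Fixpoint high_out (S v : list bool) : nat :=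
  match S, v with
  | s :: S', x :: v' => ((if negb s && x then 1 else 0) + high_out S' v')%nat
  | _, _ => 0
  end.

Fixpoint sel_sum (S v : list bool) : R :=
  match S, v with
  | s :: S', x :: v' => (if s then mean_of x else 0) + sel_sum S' v'
  | _, _ => 0
  end.

Fixpoint exchange (a b : nat) (S v : list bool) : list bool :=
  match S, v with
  | s :: S', x :: v' =>
      if s && negb x then
        match a with 0%nat => s :: exchange a b S' v' | S a' => false :: exchange a' b S' v' end
      else if negb s && x then
        match b with 0%nat => s :: exchange a b S' v' | S b' => true :: exchange a b' S' v' end
      else s :: exchange a b S' v'
  | _, _ => S
  end.

Lemma card_cons s S : card (s :: S) = ((if s then 1 else 0) + card S)%nat.
Proof. unfold card; destruct s; simpl; auto. Qed.

Lemma exchange_spec S : forall v a b, length S = length v ->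
  (a <= low_in S v)%nat -> (b <= high_out S v)%nat ->
  length (exchange a b S v) = length S /\
  (card (exchange a b S v) + a = card S + b)%nat /\
  sel_sum (exchange a b S v) v + INR a * (1/2 - eta) = sel_sum S v + INR b * (1/2 + eta).
Proof.
  induction S as [|s S IH]; intros v a b Hl Ha Hb.
  - destruct v; simpl in *; try lia.
    destruct a, b; simpl in *; try lia; repeat split; simpl; ring.
  - destruct v as [|x v]; simpl in Hl; [lia|].
    destruct s, x, a, b; cbn [exchange low_in high_out sel_sum andb negb length] in *;
    repeat match goal with
    | |- context [exchange ?a' ?b' S v] =>
        destruct (IH v a' b') as (H1 & H2 & H3); [lia | lia | lia |]
    end;
    rewrite ?card_cons; (split; [cbn [length]; lia|]); (split; [lia|]);
    rewrite ?S_INR in *; unfold mean_of in *; lra.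
Qed.

Lemma set_sum_sel_sum S : forall v j th, length S = length v ->
  (forall k, th (j + k)%nat = mean_of (nth k v false)) -> set_sum th j S = sel_sum S v.
Proof.
  induction S as [|s S IH]; intros [|x v] j th Hl Hth; simpl in Hl; try lia; simpl; auto.
  rewrite (IH v (Datatypes.S j) th) by
    (try lia; intros k; rewrite plus_Sn_m, plus_n_Sm; apply (Hth (Datatypes.S k))).
  specialize (Hth 0%nat); rewrite Nat.add_0_r in Hth; rewrite Hth; reflexivity.
Qed.

Lemma fold_Rmax_ge l x : In x l -> x <= fold_right Rmax 0 l.
Proof.
  induction l; simpl; intros H; [contradiction|].
  destruct H as [<- | H]; [apply Rmax_l|].
  eapply Rle_trans; [apply IHl; auto | apply Rmax_r].
Qed.

Lemma topK_sum_ge v S n K : length v = n -> length S = n -> card S = K ->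
  set_sum (inst v) 0 S + 2 * eta * INR (Nat.min (low_in S v) (high_out S v))
  <= topK_sum (inst v) n K.
Proof.
  intros Hv HS Hc; set (k0 := Nat.min (low_in S v) (high_out S v)).
  destruct (exchange_spec S v k0 k0) as (L1 & L2 & L3); [lia | unfold k0; lia | unfold k0; lia |].
  assert (E : set_sum (inst v) 0 (exchange k0 k0 S v) = set_sum (inst v) 0 S + 2 * eta * INR k0).
  { rewrite !(set_sum_sel_sum _ v 0 (inst v)) by (try lia; intros; reflexivity); lra. }
  rewrite <- E; apply fold_Rmax_ge, in_map, filter_In; split.
  - apply in_allvec; lia.
  - apply Nat.eqb_eq; lia.
Qed.

Lemma eps_topKb_inst v S n K eps : length v = n -> length S = n -> (0 < K)%nat ->
  eps_topKb (inst v) n K eps S = true ->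
  2 * eta * INR (Nat.min (low_in S v) (high_out S v)) <= eps * INR K.
Proof.
  intros Hv HS HK H; unfold eps_topKb in H; apply andb_prop in H; destruct H as [H1 H2].
  apply Nat.eqb_eq in H1.
  destruct (Rle_dec (regret (inst v) n K S) eps) as [Hr|]; [|discriminate].
  pose proof (topK_sum_ge v S n K Hv HS H1) as Htop.
  assert (HKr : 0 < INR K) by (apply lt_0_INR; auto).
  unfold regret in Hr; apply (Rmult_le_compat_l (INR K)) in Hr; [|lra].
  rewrite <- Rmult_assoc, Rinv_r in Hr by lra; lra.
Qed.

Definition odds : R := (1/2 + eta) / (1/2 - eta).

(** Lower bound on the posterior probability of either mean of an arm pulled
    at most [L] times, uniformly over the outcomes. *)
Definition post_lb (L : nat) : R := / (1 + odds ^ L).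

Definition shrink (L : nat) : R := 1 - post_lb L * (1 - / exp 1).

Fixpoint pulls_of (h : hist) (k : nat) : nat :=
  match h with [] => 0 | (i, _) :: h' => ((if Nat.eqb k i then 1 else 0) + pulls_of h' k)%nat end.

Lemma odds_ge1 : 1 <= odds.
Proof.
  unfold odds, eta; apply (Rmult_le_reg_r (1/2 - /10000)); [lra|].
  unfold Rdiv at 2; rewrite Rmult_assoc, Rinv_l by lra; lra.
Qed.

Lemma outcome_lik_odds b b' o : outcome_lik b o <= odds * outcome_lik b' o.
Proof.
  assert (E : 1/2 + eta = odds * (1/2 - eta)) by (unfold odds, eta; field; lra).
  pose proof odds_ge1; pose proof eta_pos.
  unfold outcome_lik, mean_of; destruct b, b', o; nra.
Qed.

Lemma arm_lik_odds h k b b' :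
  arm_lik h k b <= odds ^ pulls_of h k * arm_lik h k b'.
Proof.
  pose proof odds_ge1.
  induction h as [|[i o] h IH]; simpl; [lra|].
  destruct (Nat.eqb k i); simpl; [|lra].
  replace (odds * odds ^ pulls_of h k * (arm_lik h k b' * outcome_lik b' o))
    with ((odds ^ pulls_of h k * arm_lik h k b') * (odds * outcome_lik b' o)) by ring.
  apply Rmult_le_compat; auto using arm_lik_nonneg, Rlt_le, outcome_lik_pos, outcome_lik_odds.
Qed.

Lemma arm_lik_post_lb h k L : (pulls_of h k <= L)%nat -> forall b,
  post_lb L * (arm_lik h k true + arm_lik h k false) <= arm_lik h k b.
Proof.
  intros HT b; pose proof odds_ge1.
  assert (odds ^ pulls_of h k <= odds ^ L) by (apply Rle_pow; auto).
  assert (Hb : forall b', arm_lik h k b' <= odds ^ L * arm_lik h k b).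
  { intros b'; pose proof (arm_lik_odds h k b' b); pose proof (arm_lik_nonneg h k b); nra. }
  pose proof (Hb true); pose proof (Hb false).
  assert (0 < 1 + odds ^ L) by (pose proof (pow_R1_Rle odds L H); lra).
  unfold post_lb; apply (Rmult_le_reg_l (1 + odds ^ L)); [lra|].
  rewrite <- Rmult_assoc, Rinv_r by lra; destruct b; lra.
Qed.

Lemma exp1_gt2 : 2 < exp 1.
Proof. pose proof (exp_ineq1 1 ltac:(lra)); lra. Qed.

Lemma inv_exp1_bounds : 0 < / exp 1 < 1/2.
Proof.
  pose proof exp1_gt2; split; [apply Rinv_0_lt_compat; lra|].
  apply (Rmult_lt_reg_l (exp 1)); [lra|]; rewrite Rinv_r by lra; lra.
Qed.

Lemma post_lb_bounds L : 0 < post_lb L <= 1.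
Proof.
  unfold post_lb; pose proof odds_ge1.
  assert (1 <= odds ^ L) by (apply pow_R1_Rle; auto).
  split; [apply Rinv_0_lt_compat; lra|].
  rewrite <- Rinv_1; apply Rinv_le_contravar; lra.
Qed.

Lemma shrink_bounds L : 0 <= shrink L <= 1.
Proof. unfold shrink; pose proof (post_lb_bounds L); pose proof inv_exp1_bounds; nra. Qed.

Definition tilt (P : nat -> bool) (c : bool) (k : nat) (b : bool) : R :=
  if P k && Bool.eqb b c then / exp 1 else 1.

Lemma vprod_tilt_low_in v : forall S, length S = length v ->
  vprod (tilt (fun k => nth k S false) false) v = (/ exp 1) ^ low_in S v.
Proof.
  induction v as [|x v IH]; intros [|s S] Hl; simpl in Hl; try lia; [reflexivity|].
  simpl vprod; rewrite (vprod_ext v _ (tilt (fun k => nth k S false) false)), IH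
    by (reflexivity || lia).
  unfold tilt; destruct s, x; simpl; ring.
Qed.

Lemma vprod_tilt_high_out v : forall S, length S = length v ->
  vprod (tilt (fun k => negb (nth k S false)) true) v = (/ exp 1) ^ high_out S v.
Proof.
  induction v as [|x v IH]; intros [|s S] Hl; simpl in Hl; try lia; [reflexivity|].
  simpl vprod; rewrite (vprod_ext v _ (tilt (fun k => negb (nth k S false)) true)), IH
    by (reflexivity || lia).
  unfold tilt; destruct s, x; simpl; ring.
Qed.

Lemma pow_antimono q a b : 0 <= q <= 1 -> (a <= b)%nat -> q ^ b <= q ^ a.
Proof.
  intros Hq Hab; replace b with (a + (b - a))%nat by lia; rewrite pow_add.
  assert (0 <= q ^ a) by (apply pow_le; lra).
  assert (0 <= q ^ (b - a) <= 1)
    by (split; [apply pow_le; lra | rewrite <- (pow1 (b - a)); apply pow_incr; lra]).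
  nra.
Qed.

(** Every arm with [P k] pulled at most [L] times has posterior mass at least
    [post_lb L] on bias [c], so the tilt costs it a factor [shrink L]. *)
Lemma prod_tilt_le h n L P c :
  prod_nat (fun k => arm_lik h k true * tilt P c k true + arm_lik h k false * tilt P c k false) n
  <= shrink L ^ cnt_nat (fun k => P k && Nat.leb (pulls_of h k) L) n
     * prod_nat (fun k => arm_lik h k true + arm_lik h k false) n.
Proof.
  rewrite <- prod_nat_if_const; apply prod_nat_le; intros k.
  pose proof (arm_lik_nonneg h k true); pose proof (arm_lik_nonneg h k false).
  pose proof inv_exp1_bounds; pose proof (post_lb_bounds L).
  unfold tilt, shrink; destruct (P k); simpl; [|lra].
  destruct (Nat.leb (pulls_of h k) L) eqn:E.
  - apply Nat.leb_le in E; pose proof (arm_lik_post_lb h k L E c).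
    destruct c; simpl; split; nra.
  - destruct c; simpl; split; nra.
Qed.

Lemma sumR_hprob_inst_tilt_le pol n h L P c j : valid_policy n pol -> arms_below n h ->
  (j <= cnt_nat (fun k => P k && Nat.leb (pulls_of h k) L) n)%nat ->
  sumR (map (fun v => hprob (inst v) pol h * vprod (tilt P c) v) (allvec n))
  <= shrink L ^ j * sumR (map (fun v => hprob (inst v) pol h) (allvec n)).
Proof.
  intros Hv HF Hj.
  rewrite sumR_hprob_inst_vprod, sumR_hprob_inst by auto.
  set (Q := prod_nat (fun k => arm_lik h k true + arm_lik h k false) n).
  assert (0 <= Q) by (apply prod_nat_nonneg; intros k;
    pose proof (arm_lik_nonneg h k true); pose proof (arm_lik_nonneg h k false); lra).
  pose proof (prod_tilt_le h n L P c) as Htilt; fold Q in Htilt.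
  replace (shrink L ^ j * (pull_weight pol h * Q)) with (pull_weight pol h * (shrink L ^ j * Q))
    by ring.
  apply Rmult_le_compat_l; [apply (pull_weight_nonneg pol n h Hv)|].
  eapply Rle_trans; [exact Htilt|].
  apply Rmult_le_compat_r; auto; apply pow_antimono; auto using shrink_bounds.
Qed.

Fixpoint sum_nat (f : nat -> nat) (n : nat) : nat :=
  match n with 0%nat => 0 | S n' => (f 0%nat + sum_nat (fun k => f (S k)) n')%nat end.

Lemma cnt_nat_split n : forall P Q,
  cnt_nat P n = (cnt_nat (fun k => P k && Q k) n + cnt_nat (fun k => P k && negb (Q k)) n)%nat.
Proof.
  induction n; intros P Q; simpl; auto.
  rewrite (IHn (fun k => P (S k)) (fun k => Q (S k))).
  destruct (P 0%nat), (Q 0%nat); simpl; lia.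
Qed.

Lemma cnt_nat_mono n : forall P Q, (forall k, P k = true -> Q k = true) ->
  (cnt_nat P n <= cnt_nat Q n)%nat.
Proof.
  induction n; intros P Q H; simpl; auto.
  specialize (IHn (fun k => P (S k)) (fun k => Q (S k)) (fun k => H (S k))).
  destruct (P 0%nat) eqn:E; [rewrite (H _ E) | destruct (Q 0%nat)]; lia.
Qed.

Lemma cnt_nat_negb n : forall P, (cnt_nat P n + cnt_nat (fun k => negb (P k)) n)%nat = n.
Proof.
  induction n; intros P; simpl; auto.
  specialize (IHn (fun k => P (S k))); destruct (P 0%nat); simpl; lia.
Qed.

Lemma card_cnt_nat S : card S = cnt_nat (fun k => nth k S false) (length S).
Proof. induction S as [|s S IH]; simpl; auto; rewrite <- IH, card_cons; destruct s; lia. Qed.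

Lemma cnt_nat_gt_le_sum n : forall L f,
  (cnt_nat (fun k => Nat.ltb L (f k)) n * (L + 1) <= sum_nat f n)%nat.
Proof.
  induction n; intros L f; simpl; auto.
  specialize (IHn L (fun k => f (S k))).
  destruct (Nat.ltb L (f 0%nat)) eqn:E; [apply Nat.ltb_lt in E; nia | lia].
Qed.

Lemma sum_nat_bump n : forall f i, (i < n)%nat ->
  sum_nat (fun k => ((if Nat.eqb k i then 1 else 0) + f k)%nat) n = S (sum_nat f n).
Proof.
  induction n; intros f i Hi; [lia|].
  destruct i as [|i]; simpl; [reflexivity|].
  rewrite (IHn (fun k => f (S k)) i) by lia; lia.
Qed.

Lemma sum_nat_pulls_of n h : arms_below n h -> sum_nat (pulls_of h) n = length h.
Proof.
  induction h as [|[i o] h IH]; intros HF.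
  - simpl; clear; induction n; simpl; auto.
  - inversion HF; subst; simpl in *; rewrite <- IH by auto.
    apply sum_nat_bump; auto.
Qed.

(** [c] is the number of arms pulled more than [L] times. *)
Lemma rarely_pulled_count h S K L : length S = (2 * K)%nat -> card S = K ->
  arms_below (2 * K) h -> (2 * length h < K * (L + 1))%nat ->
  exists c, (2 * c < K)%nat /\
    (K - c <= cnt_nat (fun k => nth k S false && Nat.leb (pulls_of h k) L) (2 * K))%nat /\
    (K - c <= cnt_nat (fun k => negb (nth k S false) && Nat.leb (pulls_of h k) L) (2 * K))%nat.
Proof.
  intros HS Hc HF Hl.
  set (n := (2 * K)%nat) in *.
  set (c := cnt_nat (fun k => Nat.ltb L (pulls_of h k)) n); exists c.
  assert (c * (L + 1) <= length h)%nat
    by (rewrite <- (sum_nat_pulls_of n h HF); apply cnt_nat_gt_le_sum).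
  assert (Hmany : forall P : nat -> bool,
    (cnt_nat (fun k => P k && negb (Nat.leb (pulls_of h k) L)) n <= c)%nat).
  { intros P; apply cnt_nat_mono; intros k Hk; apply andb_prop in Hk; destruct Hk as [_ Hk].
    apply negb_true_iff, Nat.leb_gt in Hk; apply Nat.ltb_lt; auto. }
  rewrite card_cnt_nat, HS in Hc; fold n in Hc.
  pose proof (cnt_nat_split n (fun k => nth k S false) (fun k => Nat.leb (pulls_of h k) L)).
  pose proof (cnt_nat_split n (fun k => negb (nth k S false)) (fun k => Nat.leb (pulls_of h k) L)).
  pose proof (cnt_nat_negb n (fun k => nth k S false)).
  pose proof (Hmany (fun k => nth k S false)); pose proof (Hmany (fun k => negb (nth k S false))).
  simpl in *; split; [nia | split; lia].
Qed.

Lemma exp_pow y j : exp y ^ j = exp (y * INR j).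
Proof.
  induction j; simpl pow; [simpl; rewrite Rmult_0_r, exp_0; reflexivity|].
  rewrite IHj, S_INR, <- exp_plus; f_equal; ring.
Qed.

Lemma exp_le x y : x <= y -> exp x <= exp y.
Proof. intros [H | ->]; [left; apply exp_increasing; auto | lra]. Qed.

Section Posterior.
Variables (pol : policy) (K L : nat) (eps : R).
Hypothesis pol_valid : valid_policy (2 * K) pol.
Hypothesis K_pos : (0 < K)%nat.
Hypothesis tail_small : forall j, (K < 2 * j)%nat ->
  exp (eps * INR K / (2 * eta)) * (2 * shrink L ^ j) <= / 1000.

Let n := (2 * K)%nat.

(** An eps-top-K output misplaces at most [eps K / (2 eta)] arms on one side,
    so exponential tilting by [/ e] per misplaced arm bounds its indicator. *)
Lemma eps_topKb_inst_le v S : length v = n -> length S = n ->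
  (if eps_topKb (inst v) n K eps S then 1 else 0) <=
  exp (eps * INR K / (2 * eta)) *
    (vprod (tilt (fun k => nth k S false) false) v +
     vprod (tilt (fun k => negb (nth k S false)) true) v).
Proof.
  intros Hv HS.
  rewrite vprod_tilt_low_in, vprod_tilt_high_out, <- exp_Ropp, !exp_pow by lia.
  set (m0 := eps * INR K / (2 * eta)).
  pose proof (exp_pos m0); pose proof (exp_pos (- (1) * INR (low_in S v))).
  pose proof (exp_pos (- (1) * INR (high_out S v))).
  destruct (eps_topKb (inst v) n K eps S) eqn:E; [|nra].
  pose proof (eps_topKb_inst v S n K eps Hv HS K_pos E) as Hmin.
  assert (Hm : forall k, 2 * eta * INR k <= eps * INR K -> 1 <= exp m0 * exp (- (1) * INR k)).
  { intros k Hk; rewrite <- exp_plus; pose proof eta_pos.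
    assert (INR k <= m0)
      by (unfold m0; apply (Rmult_le_reg_l (2 * eta)); [lra|]; field_simplify; lra).
    pose proof (exp_ineq1_le (m0 + - (1) * INR k)); lra. }
  destruct (Nat.min_spec (low_in S v) (high_out S v)) as [[_ Em] | [_ Em]];
    rewrite Em in Hmin; apply Hm in Hmin; nra.
Qed.

Lemma posterior_eps_topK_le h S : arms_below n h -> (2 * length h < K * (L + 1))%nat ->
  length S = n ->
  sumR (map (fun v => hprob (inst v) pol h * (if eps_topKb (inst v) n K eps S then 1 else 0))
            (allvec n))
  <= / 1000 * sumR (map (fun v => hprob (inst v) pol h) (allvec n)).
Proof.
  intros HF Hl HS.
  assert (Hhp : forall v, 0 <= hprob (inst v) pol h)
    by (intros; apply (hprob_nonneg _ _ n); auto using inst_prob).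
  destruct (Nat.eq_dec (card S) K) as [Hc | Hc].
  2:{ rewrite (sumR_map_ext _ (fun _ => 0)), sumR_map_const.
      - pose proof (sumR_map_nonneg _ (allvec n) (fun v _ => Hhp v)); lra.
      - intros v _; unfold eps_topKb; apply Nat.eqb_neq in Hc; rewrite Hc; simpl; ring. }
  set (m0 := eps * INR K / (2 * eta)).
  set (tiltS := tilt (fun k => nth k S false) false).
  set (tiltSc := tilt (fun k => negb (nth k S false)) true).
  transitivity (exp m0 * (sumR (map (fun v => hprob (inst v) pol h * vprod tiltS v) (allvec n))
                        + sumR (map (fun v => hprob (inst v) pol h * vprod tiltSc v) (allvec n)))).
  { rewrite <- sumR_map_plus, <- sumR_map_scal; apply sumR_map_le; intros v Hv.
    apply allvec_length in Hv; pose proof (eps_topKb_inst_le v S Hv HS) as Hle.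
    fold m0 tiltS tiltSc in Hle; specialize (Hhp v); pose proof (exp_pos m0); nra. }
  destruct (rarely_pulled_count h S K L HS Hc HF Hl) as (c & Hc2 & Hin & Hout).
  pose proof (sumR_hprob_inst_tilt_le pol n h L _ false _ pol_valid HF Hin) as H1.
  pose proof (sumR_hprob_inst_tilt_le pol n h L _ true _ pol_valid HF Hout) as H2.
  fold tiltS in H1; fold tiltSc in H2.
  set (Z := sumR (map (fun v => hprob (inst v) pol h) (allvec n))) in *.
  assert (0 <= Z) by (apply sumR_map_nonneg; auto).
  specialize (tail_small (K - c)%nat ltac:(lia)); fold m0 in tail_small.
  apply (Rle_trans _ (exp m0 * (2 * shrink L ^ (K - c)) * Z)); [|apply Rmult_le_compat_r; auto].
  rewrite Rmult_assoc; apply Rmult_le_compat_l; [apply Rlt_le, exp_pos | lra].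
Qed.

Lemma sumR_succ_at_inst_le m : (2 * m < K * (L + 1))%nat ->
  sumR (map (fun v => succ_at (inst v) pol n K eps m) (allvec n)) <=
  / 1000 * sumR (map (fun v => stop_at (inst v) pol n m) (allvec n)).
Proof.
  intros Hm.
  set (p := fun v h => hprob (inst v) pol h).
  set (good := fun v S => if eps_topKb (inst v) n K eps S then 1 else 0).
  set (one := fun (_ _ : list bool) => 1).
  rewrite (sumR_map_ext _ (fun v => sumR (map (fun h =>
             p v h * sumR (map (fun S => good v S * out pol h S) (allvec n))) (hist_all n m)))).
  2:{ intros v _; apply sumR_map_ext; intros h _; f_equal; apply sumR_map_ext; intros S _.
      unfold good; destruct (eps_topKb (inst v) n K eps S); ring. }
  rewrite (sumR_map_ext (fun v => stop_at (inst v) pol n m) (fun v => sumR (map (fun h =>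
             p v h * sumR (map (fun S => one v S * out pol h S) (allvec n))) (hist_all n m)))).
  2:{ intros v _; apply sumR_map_ext; intros h _; f_equal.
      apply sumR_map_ext; intros; unfold one; ring. }
  rewrite (sumR_map_swap3 p good (out pol)), (sumR_map_swap3 p one (out pol)), <- sumR_map_scal.
  apply sumR_map_le; intros h Hh.
  rewrite <- sumR_map_scal; apply sumR_map_le; intros S HS.
  destruct (hist_all_spec n m h Hh) as [Hlen HF]; apply allvec_length in HS.
  rewrite (sumR_map_ext (fun v => p v h * one v S) (fun v => hprob (inst v) pol h))
    by (intros; unfold p, one; ring).
  pose proof (posterior_eps_topK_le h S HF ltac:(lia) HS) as Hpost; unfold p, good.
  destruct (pol_valid h) as [_ [Hout _]]; specialize (Hout S).
  nra.
Qed.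

Lemma exists_inst_reach_ge M : (2 * M <= K * (L + 1))%nat ->
  (forall theta, in_family n theta -> success_prob_ge theta pol n K eps (9 / 10)) ->
  exists v, 9 / 10 - / 1000 <= reach (inst v) pol n M.
Proof.
  intros HM Hsucc.
  set (G := fun v => sumR (map (succ_at (inst v) pol n K eps) (seq 0 M))).
  assert (Hsplit : forall v, 9 / 10 <= G v + reach (inst v) pol n M)
    by (intros v; apply success_le_succ_before_plus_reach; auto using inst_prob, inst_in_family).
  assert (HG : sumR (map G (allvec n)) <= / 1000 * INR (length (allvec n))).
  { unfold G; rewrite (sumR_map_swap (fun v m => succ_at (inst v) pol n K eps m)).
    transitivity (sumR (map (fun m => / 1000 * sumR (map (fun v => stop_at (inst v) pol n m)
                                                          (allvec n))) (seq 0 M))).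
    - apply sumR_map_le; intros m Hm; apply in_seq in Hm.
      apply sumR_succ_at_inst_le; lia.
    - rewrite sumR_map_scal, <- (sumR_map_swap (fun v m => stop_at (inst v) pol n m)).
      apply Rmult_le_compat_l; [lra|].
      rewrite <- (Rmult_1_r (INR _)), <- sumR_map_const; apply sumR_map_le; intros v _.
      apply sum_stop_at_le_1; auto using inst_prob. }
  destruct (exists_ge_average (fun v => reach (inst v) pol n M) (9 / 10 - / 1000) (allvec n))
    as [v [_ Hv]]; eauto.
  - intros E; pose proof (in_allvec n (repeat false n) (repeat_length false n)).
    rewrite E in *; contradiction.
  - pose proof (sumR_map_le (fun _ => 9 / 10) _ (allvec n) (fun v _ => Hsplit v)).
    rewrite sumR_map_plus, sumR_map_const in *; lra.
Qed.
End Posterior.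

Lemma odds_le_exp1 : odds <= exp 1.
Proof.
  pose proof exp1_gt2; unfold odds, eta.
  apply (Rmult_le_reg_r (1/2 - /10000)); [lra|].
  unfold Rdiv at 1; rewrite Rmult_assoc, Rinv_l by lra; lra.
Qed.

Lemma post_lb_ge L : exp (- INR L) / 2 <= post_lb L.
Proof.
  pose proof odds_ge1.
  assert (odds ^ L <= exp (INR L))
    by (rewrite <- (Rmult_1_l (INR L)), <- exp_pow; apply pow_incr; pose proof odds_le_exp1; lra).
  assert (1 <= exp (INR L)) by (pose proof (exp_ineq1_le (INR L)); pose proof (pos_INR L); lra).
  unfold post_lb; rewrite exp_Ropp; unfold Rdiv; rewrite <- Rinv_mult.
  apply Rinv_le_contravar; [pose proof (pow_R1_Rle odds L H) |]; lra.
Qed.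

Lemma shrink_le L : shrink L <= exp (- (exp (- INR L) / 4)).
Proof.
  pose proof (post_lb_ge L); pose proof (post_lb_bounds L); pose proof inv_exp1_bounds.
  eapply Rle_trans; [| apply exp_ineq1_le]; unfold shrink; nra.
Qed.

(** With [u = sqrt eps], an arm pulled at most [L <= ln (1/u)] times keeps
    posterior mass of order [u] on either mean; the misplacement budget
    [eps K / (2 eta) ~ u^2 K] is then swamped by [u K / 8]. *)
Lemma tail_small_of_sqrt K L eps u : 0 < u <= / 100000 -> eps = u * u ->
  u <= exp (- INR L) -> 1000 <= eps * INR K ->
  forall j, (K < 2 * j)%nat -> exp (eps * INR K / (2 * eta)) * (2 * shrink L ^ j) <= / 1000.
Proof.
  intros Hu Heps HuL HeK j Hj.
  assert (HjK : INR K < 2 * INR j)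
    by (replace 2 with (INR 2) by reflexivity; rewrite <- mult_INR; apply lt_INR; lia).
  assert (HK : 0 < INR K) by nra.
  assert (Hq : shrink L ^ j <= exp (- (u * INR K / 8))).
  { assert (shrink L ^ j <= exp (- (exp (- INR L) / 4)) ^ j)
      by (apply pow_incr; split; [apply shrink_bounds | apply shrink_le]).
    rewrite exp_pow in H; eapply Rle_trans; [exact H | apply exp_le; nra]. }
  assert (Hexp : eps * INR K / (2 * eta) + - (u * INR K / 8) <= - (60))
    by (subst eps; unfold eta; nra).
  assert (exp (- (60)) <= / 2000).
  { rewrite exp_Ropp; apply Rinv_le_contravar; [lra|].
    replace 60 with (20 + 20 + 20) by ring; rewrite !exp_plus.
    pose proof (exp_ineq1_le 20); pose proof (exp_pos 20); nra. }
  pose proof (exp_le _ _ Hexp); rewrite exp_plus in *.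
  pose proof (exp_pos (eps * INR K / (2 * eta))); nra.
Qed.

Lemma floor_nat t : 0 <= t -> exists L : nat, INR L <= t < INR L + 1.
Proof.
  intros Ht; destruct (archimed t) as [H1 H2].
  assert (Hz : (0 < up t)%Z) by (apply lt_IZR; simpl; lra).
  exists (Z.to_nat (up t - 1)); rewrite INR_IZR_INZ, Z2Nat.id by lia.
  rewrite minus_IZR; simpl; lra.
Qed.

Lemma ln_inv_ge_4 eps : 0 < eps -> eps <= / 10000000000 -> 4 <= ln (1 / eps).
Proof.
  intros He He1; rewrite <- (ln_exp 4); apply Rlt_le, ln_increasing; [apply exp_pos|].
  replace 4 with (1 + 1 + 1 + 1) by ring; rewrite !exp_plus.
  pose proof exp_le_3; pose proof (exp_pos 1).
  assert (10000000000 <= 1 / eps)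
    by (unfold Rdiv; rewrite Rmult_1_l, <- (Rinv_inv 10000000000); apply Rinv_le_contravar; lra).
  assert (exp 1 * exp 1 <= 9) by nra.
  assert (exp 1 * exp 1 * exp 1 * exp 1 <= 81) by nra.
  lra.
Qed.

Lemma sqr_exp_neg_half_ln_inv eps : 0 < eps ->
  eps = exp (- (ln (1 / eps) / 2)) * exp (- (ln (1 / eps) / 2)).
Proof.
  intros He; rewrite <- exp_plus.
  replace (- (ln (1 / eps) / 2) + - (ln (1 / eps) / 2)) with (- ln (1 / eps)) by field.
  rewrite exp_Ropp, exp_ln; [field; lra | apply Rdiv_lt_0_compat; lra].
Qed.

Lemma pulls_lower_bound_arith K L M t r : 1 <= INR K -> 4 <= t -> t / 2 < INR L + 1 ->
  (K * (L + 1) <= 2 * M + 1)%nat -> 9 / 10 - / 1000 <= r ->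
  / 20 * INR (2 * K) * t <= INR M * r.
Proof.
  intros HK Ht HL HM Hr.
  apply le_INR in HM; rewrite plus_INR, !mult_INR, plus_INR in HM; simpl in HM.
  assert (INR K * (t / 2) <= INR K * (INR L + 1)) by nra.
  pose proof (pos_INR M).
  rewrite mult_INR; simpl (INR 2); nra.
Qed.

Lemma expected_pulls_ge_le theta pol n B B' :
  B' <= B -> expected_pulls_ge theta pol n B -> expected_pulls_ge theta pol n B'.
Proof. intros HB H b Hb; apply H; lra. Qed.

Theorem theorem3 :
  exists c0 c1 c2 : R, 0 < c0 /\ 0 < c1 /\ 0 < c2 /\
  forall (K : nat) (eps : R),
    (1 <= K)%nat -> c0 / INR K <= eps -> eps <= c1 ->
    forall pol : policy,
      valid_policy (2 * K) pol ->
      (forall theta, in_family (2 * K) theta ->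
         success_prob_ge theta pol (2 * K) K eps (9 / 10)) ->
      exists theta, in_family (2 * K) theta /\
        expected_pulls_ge theta pol (2 * K) (c2 * INR (2 * K) * ln (1 / eps)).
Proof.
  exists 1000, (/ 10000000000), (/ 20); split; [lra|]; split; [lra|]; split; [lra|].
  intros K eps HK Hlo Hhi pol Hval Hsucc.
  assert (HKr : 1 <= INR K) by (apply (le_INR 1); lia).
  assert (HeK : 1000 <= eps * INR K)
    by (unfold Rdiv in Hlo; apply (Rmult_le_compat_r (INR K)) in Hlo;
        [rewrite Rmult_assoc, Rinv_l in Hlo |]; lra).
  assert (He : 0 < eps) by nra.
  set (t := ln (1 / eps)).
  assert (Ht : 4 <= t) by (apply ln_inv_ge_4; lra).
  set (u := exp (- (t / 2))).
  assert (Hu : eps = u * u) by (apply sqr_exp_neg_half_ln_inv; lra).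
  assert (Hu0 : 0 < u) by apply exp_pos.
  destruct (floor_nat (t / 2)) as [L [HL1 HL2]]; [lra|].
  set (M := Nat.div (K * (L + 1)) 2).
  pose proof (Nat.div_mod_eq (K * (L + 1)) 2); pose proof (Nat.mod_upper_bound (K * (L + 1)) 2).
  destruct (exists_inst_reach_ge pol K L eps Hval ltac:(lia)
              (tail_small_of_sqrt K L eps u ltac:(nra) Hu ltac:(apply exp_le; lra) HeK)
              M ltac:(lia) Hsucc) as [v Hreach].
  exists (inst v); split; [apply inst_in_family|].
  eapply expected_pulls_ge_le; [| apply (expected_pulls_ge_of_reach _ _ _ Hval (inst_prob v) M)].
  apply (pulls_lower_bound_arith K L); auto; lia.
Qed.
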